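(* A graph $G=(V,E)$ is $(1,1)$-well-covered if and only if there is a positive integer $k$ and a partition $V=(S,K)$ with $S$ an independent set, $K$ a clique and $|K|=k$, such that the degree sequence of $G$ (listing first the $k$ vertices of $K$ and then the vertices of $S$) is either $(k,k,\ldots,k,i_1,i_2,\ldots,i_s,0,0,\ldots,0)$ with $\sum_{j=1}^s i_j = k$, or $(k-1,k-1,\ldots,k-1,0,0,\ldots,0)$, where the initial blocks $k,\ldots,k$ (resp. $k-1,\ldots,k-1$) have length $k$.
   Context: A $(1,1)$-partition of $G$ is a partition of $V(G)$ into an independent set and a clique. A graph is well-covered if all its maximal independent sets have the same cardinality; it is $(1,1)$-well-covered if it admits a $(1,1)$-partition and is well-covered. *)

From mathcomp Require Import all_boot.
Set Implicit Arguments. Unset Strict Implicit. Unset Printing Implicit Defensive.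

Section Graphs.
Variables (T : finType) (e : rel T).

Definition simple_graph : Prop := symmetric e /\ irreflexive e.

Definition independent (A : {set T}) : bool :=
  [forall x in A, forall y in A, ~~ e x y].

Definition clique (K : {set T}) : bool :=
  [forall x in K, forall y in K, (x != y) ==> e x y].

Definition maximal_independent (A : {set T}) : bool :=
  maxset independent A.

Definition well_covered : Prop :=
  forall A B : {set T}, maximal_independent A -> maximal_independent B ->
    #|A| = #|B|.

Definition partition11 (S K : {set T}) : bool :=
  [&& S :|: K == [set: T], [disjoint S & K], independent S & clique K].

Definition has_partition11 : Prop := exists S K, partition11 S K.

Definition well_covered11 : Prop := has_partition11 /\ well_covered.

Definition deg (v : T) : nat := #|[set u | e v u]|.

End Graphs.

From mathcomp Require Import all_boot.
From mathcomp Require Import zify.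
Set Implicit Arguments. Unset Strict Implicit. Unset Printing Implicit Defensive.

(* Fix a (1,1)-partition (S, K) and let N(v) be the set of neighbours in S of
   a clique vertex v. The maximal independent sets are S itself (when every
   N(v) is nonempty) and the sets v + (S - N(v)) for v in K, of size
   |S| - |N(v)| + 1. Hence the graph is well-covered iff either every N(v) is
   a singleton or every N(v) is empty. Since a clique vertex has degree
   |K| - 1 + |N(v)|, these are the two degree sequences of the statement; when
   every N(v) is a singleton the degrees in S add up to sum_v |N(v)| = |K|.
   An edgeless graph has the partition (V - x, {x}), so K may be assumed
   nonempty. *)

Section Graph.
Variables (T : finType) (e : rel T).

Lemma independentP (A : {set T}) :
  reflect {in A &, forall x y, ~~ e x y} (independent e A).
Proof.
apply: (iffP forall_inP) => [h x y xA yA | h x xA].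
  exact: (forall_inP (h x xA)).
by apply/forall_inP => y; apply: h.
Qed.

Lemma cliqueP (K : {set T}) :
  reflect {in K &, forall x y, x != y -> e x y} (clique e K).
Proof.
apply: (iffP forall_inP) => [h x y xK yK | h x xK].
  exact/implyP/(forall_inP (h x xK)).
by apply/forall_inP => y yK; apply/implyP; apply: h.
Qed.

Lemma well_covered_const (c : nat) :
  (forall A, maximal_independent e A -> #|A| = c) -> well_covered e.
Proof. by move=> h A B /h -> /h ->. Qed.

Lemma exists_partition11_clique_gt0 :
  0 < #|T| -> has_partition11 e -> exists S K, partition11 e S K /\ 0 < #|K|.
Proof.
case/card_gt0P=> x _ [S [K SK]].
have /and4P[/eqP SUK _ /independentP indS _] := SK.
have [K0 | K_gt0] := posnP #|K|; last by exists S, K.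
have {SUK K0} S_T : S = setT by rewrite -SUK (cards0_eq K0) setU0.
exists (setT :\ x), [set x]; rewrite cards1; split=> //.
apply/and4P; split.
- by apply/eqP/setP=> y; rewrite !inE orbC; case: eqP.
- by rewrite disjoint_sym disjoints1 !inE eqxx.
- by apply/independentP=> y z _ _; apply: indS; rewrite S_T.
- by apply/cliqueP=> y z /set1P -> /set1P ->; rewrite eqxx.
Qed.

Hypotheses (e_sym : symmetric e) (e_irr : irreflexive e).

Section Partition.
Variables S K : {set T}.
Hypothesis SK : partition11 e S K.

Let indS : {in S &, forall x y, ~~ e x y}.
Proof. by case/and4P: SK => _ _ /independentP. Qed.

Let adjK : {in K &, forall x y, x != y -> e x y}.
Proof. by case/and4P: SK => _ _ _ /cliqueP. Qed.

Lemma stable_or_clique x : (x \in S) || (x \in K).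
Proof. by case/and4P: SK => /eqP SUK _ _ _; rewrite -in_setU SUK inE. Qed.

Lemma stable_notin_clique x : x \in S -> x \notin K.
Proof. by case/and4P: SK => _ disSK _ _ /(disjointFr disSK) ->. Qed.

Lemma clique_notin_stable x : x \in K -> x \notin S.
Proof. by apply: contraL => /stable_notin_clique. Qed.

Definition nbhdS (v : T) : {set T} := [set u in S | e v u].

Definition exchange (v : T) : {set T} := v |: (S :\: nbhdS v).

Lemma nbhdS_sub v : nbhdS v \subset S.
Proof. by apply/subsetP=> u /setIdP[]. Qed.

Lemma card_exchange v : v \in K -> #|exchange v| = (#|S| - #|nbhdS v|).+1.
Proof.
move=> vK; rewrite cardsU1 cardsD (setIidPr (nbhdS_sub v)).
by rewrite !inE (negbTE (clique_notin_stable vK)).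
Qed.

Lemma exchange_independent v : v \in K -> independent e (exchange v).
Proof.
move=> vK; apply/independentP=> x y.
rewrite !inE => /predU1P[-> | /andP[vx xS]] /predU1P[-> | /andP[vy yS]].
- by rewrite e_irr.
- by rewrite yS in vy.
- by rewrite e_sym; rewrite xS in vx.
- exact: indS.
Qed.

Lemma independent_sub_exchange B v :
  v \in K -> independent e B -> v \in B -> B \subset exchange v.
Proof.
move=> vK /independentP indB vB; apply/subsetP=> x xB.
have [xS | xK] := orP (stable_or_clique x).
  by rewrite !inE xS (indB v x vB xB) orbT.
have [-> | xv] := eqVneq x v; first by rewrite !inE eqxx.
by have := indB x v xB vB; rewrite adjK.
Qed.

Lemma exchange_maximal v : v \in K -> maximal_independent e (exchange v).
Proof.
move=> vK; apply/maxsetP; split=> [|B indB sAB].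
  exact: exchange_independent.
apply/eqP; rewrite eqEsubset sAB andbT; apply: independent_sub_exchange => //.
by apply: (subsetP sAB); rewrite !inE eqxx.
Qed.

Lemma stable_maximal :
  {in K, forall v, nbhdS v != set0} -> maximal_independent e S.
Proof.
move=> N_gt0; apply/maxsetP; split=> [|B /independentP indB sSB].
  by apply/independentP.
apply/eqP; rewrite eqEsubset sSB andbT; apply/subsetP=> x xB.
have [// | xK] := orP (stable_or_clique x).
case/set0Pn: (N_gt0 x xK) => u /setIdP[uS xu].
by have := indB x u xB (subsetP sSB u uS); rewrite xu.
Qed.

Lemma stable_not_maximal v :
  v \in K -> nbhdS v = set0 -> ~~ maximal_independent e S.
Proof.
move=> vK N0; apply/negP=> /maxsetP[_ maxS].
have sSA : S \subset exchange v by rewrite /exchange N0 setD0 subsetUr.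
have := setU11 v (S :\: nbhdS v); rewrite -/(exchange v).
rewrite (maxS _ (exchange_independent vK) sSA).
exact/negP/clique_notin_stable.
Qed.

Lemma maximal_independent_cases A :
  maximal_independent e A -> A = S \/ exists2 v, v \in K & A = exchange v.
Proof.
case/maxsetP=> indA maxA.
have [AK0 | [v /setIP[vA vK]]] := set_0Vmem (A :&: K); [left | right].
  apply/esym/maxA; first exact/independentP.
  apply/subsetP=> x xA; have [// | xK] := orP (stable_or_clique x).
  by have /setP/(_ x) := AK0; rewrite !inE xA xK.
exists v => //; apply/esym/maxA; first exact: exchange_independent.
exact: independent_sub_exchange.
Qed.

Lemma well_covered_iff_nbhdS :
  well_covered e <->
  {in K, forall v, #|nbhdS v| = 1} \/ {in K, forall v, #|nbhdS v| = 0}.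
Proof.
have N_le v : #|nbhdS v| <= #|S| by apply: subset_leq_card (nbhdS_sub v).
split=> [wc | [N1 | N0]].
- have [/exists_inP[v0 v0K /eqP N0] | ] :=
    boolP [exists v in K, nbhdS v == set0].
    right=> v vK; have := wc _ _ (exchange_maximal vK) (exchange_maximal v0K).
    by rewrite !card_exchange // N0 cards0; have := N_le v; lia.
  rewrite negb_exists_in => /forall_inP N_gt0.
  left=> v vK; have := wc _ _ (exchange_maximal vK) (stable_maximal N_gt0).
  have N_pos : 0 < #|nbhdS v| by rewrite card_gt0 N_gt0.
  by rewrite card_exchange //; have := N_le v; lia.
- apply: (@well_covered_const #|S|) => A /maximal_independent_cases.
  case=> [-> // | [v vK ->]]; rewrite card_exchange // N1 //.
  by have := N_le v; rewrite N1 //; lia.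
- have [K0 | [v0 v0K]] := set_0Vmem K.
    apply: (@well_covered_const #|S|) => A /maximal_independent_cases.
    by case=> [-> // | [v]]; rewrite K0 inE.
  apply: (@well_covered_const #|S|.+1) => A maxA.
  have [AS | [v vK ->]] := maximal_independent_cases maxA.
    by have := stable_not_maximal v0K (cards0_eq (N0 v0 v0K)); rewrite -AS maxA.
  by rewrite card_exchange // N0 // subn0.
Qed.

Lemma deg_clique v : v \in K -> deg e v = #|K|.-1 + #|nbhdS v|.
Proof.
move=> vK; rewrite /deg (cardsD1 v K) vK add1n -cardsUI.
have -> : [set u | e v u] = (K :\ v) :|: nbhdS v.
  apply/setP=> u; rewrite !inE.
  have [uS | uK] := orP (stable_or_clique u).
    by rewrite uS (negbTE (stable_notin_clique uS)) andbF.
  rewrite uK (negbTE (clique_notin_stable uK)) andbT orbF.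
  by have [-> | uv] := eqVneq u v; [rewrite e_irr | rewrite adjK // eq_sym].
suff -> : (K :\ v) :&: nbhdS v = set0 by rewrite cards0 addn0.
apply/setP=> u; rewrite !inE; apply/negbTE.
case: (boolP (u \in K)) => [/clique_notin_stable/negbTE -> | _];
  by rewrite !andbF.
Qed.

Lemma deg_stable u : u \in S -> deg e u = \sum_(v in K) (u \in nbhdS v).
Proof.
move=> uS; rewrite /deg -sum1dep_card big_mkcond [RHS]big_mkcond /=.
apply: eq_bigr=> v _; rewrite !inE uS e_sym.
have [vS | vK] := orP (stable_or_clique v).
  by rewrite (negbTE (indS vS uS)) (negbTE (stable_notin_clique vS)).
by rewrite vK; case: (e v u).
Qed.

Lemma sum_deg_stable : \sum_(u in S) deg e u = \sum_(v in K) #|nbhdS v|.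
Proof.
rewrite (eq_bigr _ deg_stable) exchange_big; apply: eq_bigr=> v _.
rewrite -sum1dep_card big_mkcond [RHS]big_mkcond /=.
by apply: eq_bigr=> u _; rewrite inE; case: (u \in S); case: (e v u).
Qed.

Lemma deg_stable_eq0 :
  {in K, forall v, #|nbhdS v| = 0} -> {in S, forall u, deg e u = 0}.
Proof.
move=> N0 u uS; rewrite deg_stable // big1 // => v vK.
by rewrite (cards0_eq (N0 v vK)) inE.
Qed.

End Partition.
End Graph.

Theorem lemma4 (T : finType) (e : rel T) :
  simple_graph e -> 0 < #|T| ->
  well_covered11 e <->
  exists (k : nat) (S K : {set T}),
    [/\ 0 < k, partition11 e S K, #|K| = k &
      ((forall v, v \in K -> deg e v = k) /\ \sum_(v in S) deg e v = k
       \/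
       (forall v, v \in K -> deg e v = k.-1) /\ (forall v, v \in S -> deg e v = 0))].
Proof.
move=> [e_sym e_irr] T_gt0; split.
- case=> /(exists_partition11_clique_gt0 T_gt0) [S [K [SK K_gt0]]] wc.
  exists #|K|, S, K; split=> //.
  have [N1 | N0] := (well_covered_iff_nbhdS e_sym e_irr SK).1 wc; [left | right].
    split=> [v vK | ]; first by rewrite (deg_clique e_irr SK vK) N1 //; lia.
    by rewrite (sum_deg_stable e_sym SK) (eq_bigr _ N1) sum1_card.
  split=> [v vK | ]; first by rewrite (deg_clique e_irr SK vK) N0 // addn0.
  exact: (deg_stable_eq0 e_sym SK).
- case=> k [S [K [k_gt0 SK K_k degs]]].
  split; first by exists S, K.
  apply/(well_covered_iff_nbhdS e_sym e_irr SK); rewrite -{}K_k in k_gt0 degs.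
  case: degs => -[degK _]; [left | right] => v vK;
    by have := degK v vK; rewrite (deg_clique e_irr SK vK); lia.
Qed.
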